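(* Let $q\in(0,1)$ and $b>0$, and let $(s_n)_{n\ge0}$ be a sequence of positive numbers together with an infinite set $B=\{n_1<n_2<\dots\}$ of nonnegative integers (the bad subscripts) such that $s_{n+1}=qs_n$ for $n\notin B$ and $s_{n+1}\le 2qs_n+b$ for $n\in B$. Suppose $n_{i+1}-n_i\to\infty$ as $i\to\infty$. Then $s_{n_i}\to0$ as $i\to\infty$. *)

From Stdlib Require Export Reals.
Open Scope R_scope.

(* The set of bad subscripts B = {nb 0 < nb 1 < ...}, given by a strictly
   increasing enumeration nb : nat -> nat. *)
Definition in_B (nb : nat -> nat) (k : nat) : Prop := exists i, nb i = k.

(* Between two consecutive bad subscripts the sequence decays geometrically,
   so s (n_(i+1)) <= q^(n_(i+1) - n_i - 1) (2 q s (n_i) + b).  Once the gaps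
   are large enough, the factor q^(...) makes this at most s (n_i) / 2 + eps,
   and a nonnegative sequence obeying such a halving recursion, for every eps
   from some index on, tends to 0. *)

From Stdlib Require Import Reals Lra Lia.
Open Scope R_scope.

Lemma pow_antimono_le1 (q : R) (m n : nat) :
  0 <= q <= 1 -> (m <= n)%nat -> q ^ n <= q ^ m.
Proof.
  intros hq hmn.
  replace n with (m + (n - m))%nat by lia.
  rewrite pow_add.
  assert (hle1 : q ^ (n - m) <= 1).
  { rewrite <- (pow1 (n - m)). apply pow_incr. lra. }
  pose proof (pow_le q m ltac:(lra)).
  nra.
Qed.

Lemma pow_eventually_lt (q eps : R) :
  0 <= q < 1 -> 0 < eps -> exists M, q ^ M < eps.
Proof.
  intros hq heps.
  destruct (pow_lt_1_zero q ltac:(rewrite Rabs_pos_eq; lra) eps heps) as [M hM].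
  exists M.
  specialize (hM M (le_n M)).
  rewrite Rabs_pos_eq in hM; [exact hM | apply pow_le; lra].
Qed.

Lemma geometric_run (q : R) (s : nat -> R) (a m : nat) :
  (forall k, (k < m)%nat -> s (S (a + k)) = q * s (a + k)%nat) ->
  s (a + m)%nat = q ^ m * s a.
Proof.
  induction m as [|m IH]; intros hrun.
  - rewrite Nat.add_0_r. simpl. ring.
  - rewrite Nat.add_succ_r, (hrun m) by lia.
    rewrite IH by (intros k hk; apply hrun; lia).
    simpl. ring.
Qed.

Lemma cv0_of_eventual_halving (u : nat -> R) :
  (forall n, 0 <= u n) ->
  (forall eps, 0 < eps ->
     exists I, forall i, (I <= i)%nat -> u (S i) <= u i / 2 + eps) ->
  Un_cv u 0.
Proof.
  intros u_ge0 halving eps heps.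
  destruct (halving (eps / 4) ltac:(lra)) as [I hI].
  assert (iterate : forall k, u (I + k)%nat <= u I / 2 ^ k + eps / 2).
  { induction k as [|k IH].
    - rewrite Nat.add_0_r. simpl. lra.
    - rewrite Nat.add_succ_r.
      replace (u I / 2 ^ S k) with (u I / 2 ^ k / 2)
        by (simpl; field; apply pow_nonzero; lra).
      pose proof (hI (I + k)%nat ltac:(lia)).
      lra. }
  destruct (cv_pow_half (u I) (eps / 2) ltac:(lra)) as [K hK].
  exists (I + K)%nat. intros n hn.
  specialize (hK (n - I)%nat ltac:(lia)).
  pose proof (iterate (n - I)%nat) as hn_bound.
  replace (I + (n - I))%nat with n in hn_bound by lia.
  unfold R_dist in *. rewrite Rminus_0_r in *.
  rewrite Rabs_pos_eq by apply u_ge0.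
  pose proof (Rle_abs (u I / 2 ^ (n - I))).
  lra.
Qed.

Section BadSubscripts.

Variables (q b : R) (s : nat -> R) (nb : nat -> nat).
Hypothesis hq : 0 < q < 1.
Hypothesis hs : forall n, 0 < s n.
Hypothesis hinc : forall i, (nb i < nb (S i))%nat.
Hypothesis hgood : forall n, ~ in_B nb n -> s (S n) = q * s n.
Hypothesis hbad : forall n, in_B nb n -> s (S n) <= 2 * q * s n + b.

Lemma nb_lt_mono (i j : nat) : (i < j)%nat -> (nb i < nb j)%nat.
Proof.
  induction 1 as [|j _ IH]; [apply hinc | specialize (hinc j); lia].
Qed.

Lemma not_in_B_between (i n : nat) :
  (nb i < n < nb (S i))%nat -> ~ in_B nb n.
Proof.
  intros hn [j <-].
  destruct (Nat.lt_trichotomy j i) as [hji | [-> | hij]].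
  - pose proof (nb_lt_mono j i hji). lia.
  - lia.
  - destruct (Nat.eq_dec j (S i)) as [-> | hne]; [lia |].
    pose proof (nb_lt_mono (S i) j ltac:(lia)). lia.
Qed.

Lemma s_next_bad (i : nat) :
  s (nb (S i)) = q ^ (nb (S i) - S (nb i)) * s (S (nb i)).
Proof.
  pose proof (hinc i).
  set (g := (nb (S i) - S (nb i))%nat).
  replace (nb (S i)) with (S (nb i) + g)%nat by (unfold g; lia).
  apply geometric_run.
  intros k hk. apply hgood, (not_in_B_between i). unfold g in hk. lia.
Qed.

Lemma s_next_bad_halving (i M : nat) :
  q ^ M <= 1 / 4 -> (S M <= nb (S i) - nb i)%nat ->
  s (nb (S i)) <= s (nb i) / 2 + q ^ M * b.
Proof.
  intros hM hgap.
  rewrite s_next_bad.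
  assert (decay : q ^ (nb (S i) - S (nb i)) <= q ^ M)
    by (apply pow_antimono_le1; [lra | lia]).
  assert (jump : s (S (nb i)) <= 2 * q * s (nb i) + b)
    by (apply hbad; exists i; reflexivity).
  pose proof (hs (nb i)). pose proof (hs (S (nb i))).
  pose proof (pow_le q M ltac:(lra)).
  apply Rle_trans with (q ^ M * (2 * q * s (nb i) + b)).
  - apply Rle_trans with (q ^ M * s (S (nb i))).
    + apply Rmult_le_compat_r; lra.
    + apply Rmult_le_compat_l; lra.
  - assert (q ^ M * q <= 1 / 4) by nra.
    nra.
Qed.

End BadSubscripts.

Theorem lemma6p1 (q b : R) (s : nat -> R) (nb : nat -> nat)
  (hq : 0 < q < 1) (hb : 0 < b)
  (hs : forall n, 0 < s n)
  (hinc : forall i, (nb i < nb (S i))%nat)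
  (hgood : forall n, ~ in_B nb n -> s (S n) = q * s n)
  (hbad : forall n, in_B nb n -> s (S n) <= 2 * q * s n + b)
  (hgap : forall M : nat, exists I : nat, forall i, (I <= i)%nat ->
            (M <= nb (S i) - nb i)%nat) :
  Un_cv (fun i => s (nb i)) 0.
Proof.
  apply cv0_of_eventual_halving; [intro n; apply Rlt_le, hs |].
  intros eps heps.
  assert (hpos : 0 < Rmin (1 / 4) (eps / b))
    by (apply Rmin_pos; [lra | apply Rdiv_lt_0_compat; lra]).
  destruct (pow_eventually_lt q _ ltac:(lra) hpos) as [M hM].
  assert (hM4 : q ^ M <= 1 / 4) by (pose proof (Rmin_l (1 / 4) (eps / b)); lra).
  assert (hMb : q ^ M * b <= eps).
  { pose proof (Rmin_r (1 / 4) (eps / b)).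
    replace eps with (eps / b * b) by (field; lra).
    apply Rmult_le_compat_r; lra. }
  destruct (hgap (S M)) as [I hI].
  exists I. intros i hi.
  pose proof (s_next_bad_halving q b s nb hq hs hinc hgood hbad i M hM4 (hI i hi)).
  lra.
Qed.
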